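(* Let $\mathcal{A}=\{\alpha_1<\dots<\alpha_m\}\subset(0,1)$, $|\mathcal{A}|=m$. Let $(b_t)$ be base forecasts with $b_t\in\mathcal{K}$ and $(y_t)$ real outcomes with $|y_t-b_t^{\alpha}|\le R$ for all $\alpha\in\mathcal{A}$ and all $t$. Let $\ell_t(\theta)=\rho_{\mathcal{A}}(b_t+\theta,y_t)$. Let $\theta_1,\dots,\theta_T$ be the played offsets of MultiQT with learning rate $\eta>0$ started from $\tilde\theta_1=\mathbf{0}$, and let $\mathcal{C}=\bigcap_{t=1}^{T+1}(\mathcal{K}-b_t)$. Then for every $\theta\in\mathcal{C}$, $$\frac1T\sum_{t=1}^T\ell_t(\theta_t)-\frac1T\sum_{t=1}^T\ell_t(\theta)\le\frac{R^2|\mathcal{A}|}{2\eta T}+2\eta|\mathcal{A}|.$$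
   Context: $\mathcal{K}=\{x\in\mathbb{R}^m:x_1\le\dots\le x_m\}$; $\Pi_C$ is Euclidean projection; $C-v=\{x-v:x\in C\}$. Quantile loss: $\rho_\alpha(\hat y,y)=\alpha|y-\hat y|$ if $y-\hat y\ge0$ and $(1-\alpha)|y-\hat y|$ otherwise; $\rho_{\mathcal{A}}(q,y)=\sum_{\alpha\in\mathcal{A}}\rho_\alpha(q^{\alpha},y)$. MultiQT with learning rate $\eta$ and initial hidden offset $\tilde\theta_1\in\mathcal{K}$: for $t=1,2,\dots$, $\theta_t=\Pi_{\mathcal{K}-b_t}(\tilde\theta_t)$, forecast $q_t=b_t+\theta_t$, $\mathrm{cov}_t^{\alpha}=\mathbb{1}\{y_t\le q_t^{\alpha}\}$, and $\tilde\theta_{t+1}^{\alpha}=\tilde\theta_t^{\alpha}-\eta(\mathrm{cov}_t^{\alpha}-\alpha)$ for each $\alpha\in\mathcal{A}$. *)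

From mathcomp Require Import all_boot all_order all_algebra.
From mathcomp Require Import reals.
Set Implicit Arguments. Unset Strict Implicit. Unset Printing Implicit Defensive.
Import Order.TTheory GRing.Theory Num.Theory.
Local Open Scope ring_scope.

Definition inK (R : realType) (m : nat) (x : 'I_m -> R) : Prop :=
  forall i j : 'I_m, (i <= j)%N -> x i <= x j.

Definition inK_minus (R : realType) (m : nat) (v x : 'I_m -> R) : Prop :=
  exists k : 'I_m -> R, inK k /\ x = (fun i => k i - v i).

Definition sqdist (R : realType) (m : nat) (x z : 'I_m -> R) : R :=
  \sum_(i < m) (x i - z i) ^+ 2.

(* p is the Euclidean projection of z onto the set C
   (the minimizer of the Euclidean distance to z over C; unique when C is
   closed, convex and nonempty, as is K - v). *)
Definition is_proj (R : realType) (m : nat) (C : ('I_m -> R) -> Prop)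
  (z p : 'I_m -> R) : Prop :=
  C p /\ forall x, C x -> sqdist p z <= sqdist x z.

Definition rho (R : realType) (alpha yhat y : R) : R :=
  if 0 <= y - yhat then alpha * `|y - yhat| else (1 - alpha) * `|y - yhat|.

(* rho_A(q, y) = sum over alpha in A of rho_alpha(q^alpha, y);
   A = {alpha_1 < ... < alpha_m} is given by alpha : 'I_m -> R. *)
Definition rhoA (R : realType) (m : nat) (alpha : 'I_m -> R)
  (q : 'I_m -> R) (y : R) : R :=
  \sum_(i < m) rho (alpha i) (q i) y.

Definition cov (R : realType) (y q : R) : R := if y <= q then 1 else 0.

Definition MultiQT_run (R : realType) (m : nat) (alpha : 'I_m -> R) (eta : R)
  (b : nat -> 'I_m -> R) (y : nat -> R)
  (theta thetatilde : nat -> 'I_m -> R) : Prop :=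
  forall t : nat, (1 <= t)%N ->
    is_proj (inK_minus (b t)) (thetatilde t) (theta t) /\
    forall i : 'I_m,
      thetatilde t.+1 i =
        thetatilde t i - eta * (cov (y t) (b t i + theta t i) - alpha i).

From mathcomp Require Import all_boot all_order all_algebra.
From mathcomp Require Import reals boolp.
From mathcomp Require Import ring lra.
Import Order.TTheory GRing.Theory Num.Theory.
Set Implicit Arguments. Unset Strict Implicit. Unset Printing Implicit Defensive.
Local Open Scope ring_scope.

(* MultiQT is projected online subgradient descent on the losses l_t, whose
   subgradients cov_t - alpha have entries in [-1, 1].  The one-step inequality
   of online gradient descent survives the projection because the subgradient
   at the projection p of z makes an obtuse angle with p - z: z - p lies in the
   normal cone of K - b at p, and alpha - cov is a feasible direction there
   (cov is the indicator of a suffix and alpha is increasing).  Telescoping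
   bounds the regret against any comparator in the box [-Rb, Rb]^m by
   Rb^2 m / (2 eta) + T eta m / 2, and clamping an arbitrary comparator into the
   box only lowers its losses, since every y_t - b_t^alpha lies in [-Rb, Rb].
   So the bound holds for every comparator, not only for those in C. *)

Section Projection.
Variables (R : realType) (m : nat).
Implicit Types (b x z p v : 'I_m -> R).

Lemma inK_minusP b x : inK_minus b x <-> inK (fun i => b i + x i).
Proof.
split=> [[k [Kk ->]] i j ij | Kbx]; first by rewrite !subrKC; exact: Kk.
by exists (fun i => b i + x i); split=> //; apply: funext => i; rewrite addrC addKr.
Qed.

Lemma sqdist_shift p z v (e : R) :
  sqdist (fun i => p i + e * v i) z =
  sqdist p z - 2 * e * \sum_i (z i - p i) * v i + e ^+ 2 * \sum_i v i ^+ 2.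
Proof.
rewrite /sqdist !mulr_sumr -sumrB -big_split /=.
by apply: eq_bigr => i _; ring.
Qed.

Lemma is_proj_dir_le0 (C : ('I_m -> R) -> Prop) z p v (e0 : R) :
  is_proj C z p -> 0 < e0 ->
  (forall e, 0 < e <= e0 -> C (fun i => p i + e * v i)) ->
  \sum_i (z i - p i) * v i <= 0.
Proof.
move=> [_ p_min] e0_gt0 Cdir.
set A := \sum_i _; set B := \sum_i v i ^+ 2.
have B_ge0 : 0 <= B by apply: sumr_ge0 => i _; exact: sqr_ge0.
rewrite leNgt; apply/negP => A_gt0.
(* a step e small enough that e * B < 2 * A would strictly decrease the distance *)
set e := e0 * A / (e0 * B + A).
have den_gt0 : 0 < e0 * B + A by rewrite ltr_wpDl // mulr_ge0 // ltW.
have e_gt0 : 0 < e by rewrite divr_gt0 // mulr_gt0.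
have e_le : e <= e0 by rewrite /e ler_pdivrMr //; nra.
have eB_lt : e * B < 2 * A by rewrite /e mulrAC ltr_pdivrMr //; nra.
have e_ok : 0 < e <= e0 by rewrite e_gt0 e_le.
have := p_min _ (Cdir e e_ok); rewrite sqdist_shift -/A -/B.
have : e * (e * B) < e * (2 * A) by rewrite ltr_pM2l.
lra.
Qed.

End Projection.

Lemma is_proj_cov_grad_le0 (R : realType) m (alpha b z p : 'I_m -> R) (y : R) :
  (forall i j : 'I_m, (i <= j)%N -> alpha i <= alpha j) ->
  is_proj (inK_minus b) z p ->
  \sum_i (cov y (b i + p i) - alpha i) * (p i - z i) <= 0.
Proof.
move=> alpha_mono proj_p.
have Kq : inK (fun i => b i + p i) by apply/inK_minusP; case: proj_p.
(* [alpha - cov] is feasible at [b + p] as long as the step stays below the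
   gap [y - q_i] of every forecast [q_i] strictly below [y] *)
pose e0 := \big[Num.min/1]_(i | b i + p i < y) (y - (b i + p i)).
have e0_gt0 : 0 < e0 by apply: lt_bigmin => // i; rewrite subr_gt0.
rewrite (eq_bigr (fun i => (z i - p i) * (alpha i - cov y (b i + p i)))) => [|i _];
  last by ring.
apply: (is_proj_dir_le0 proj_p e0_gt0) => e /andP[e_gt0 e_le].
apply/inK_minusP => i j ij /=.
have := Kq i j ij; have := alpha_mono i j ij; rewrite /= /cov.
case: (leP y (b i + p i)) => [|qi_lt]; case: (leP y (b j + p j)) => qj; try nra.
have := le_trans e_le (bigmin_le_cond _ (fun i => y - (b i + p i)) qi_lt); nra.
Qed.

Lemma rho_subgrad (R : realType) (a x u y : R) :
  rho a x y - rho a u y <= (cov y x - a) * (x - u).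
Proof.
rewrite /rho /cov.
case: (leP 0 (y - x)) => h1; case: (leP 0 (y - u)) => h2; case: (leP y x) => h3;
  rewrite ?(ger0_norm h1) ?(ger0_norm h2) ?(ltr0_norm h1) ?(ltr0_norm h2); nra.
Qed.

Lemma gradient_step_le (R : realType) (eta g z u : R) :
  0 < eta -> g ^+ 2 <= 1 ->
  g * (z - u) <= ((z - u) ^+ 2 - (z - eta * g - u) ^+ 2) / (2 * eta) + eta / 2.
Proof.
move=> eta_gt0 g2_le1.
have -> : ((z - u) ^+ 2 - (z - eta * g - u) ^+ 2) / (2 * eta) =
  g * (z - u) - eta / 2 * g ^+ 2 by field; lra.
nra.
Qed.

Lemma sqr_cov_sub_le1 (R : realType) (y q a : R) :
  0 <= a <= 1 -> (cov y q - a) ^+ 2 <= 1.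
Proof. by move=> /andP[a0 a1]; rewrite /cov; case: ifP => _; nra. Qed.

Lemma multiqt_step (R : realType) m (alpha b : 'I_m -> R) (y eta : R)
    (z z' p u : 'I_m -> R) :
  (forall i j : 'I_m, (i <= j)%N -> alpha i <= alpha j) ->
  (forall i, 0 <= alpha i <= 1) -> 0 < eta ->
  is_proj (inK_minus b) z p ->
  (forall i, z' i = z i - eta * (cov y (b i + p i) - alpha i)) ->
  rhoA alpha (fun i => b i + p i) y - rhoA alpha (fun i => b i + u i) y <=
  (sqdist z u - sqdist z' u) / (2 * eta) + eta * m%:R / 2.
Proof.
move=> alpha_mono alpha01 eta_gt0 proj_p z'E.
set g := fun i => cov y (b i + p i) - alpha i.
have subgrad : rhoA alpha (fun i => b i + p i) y - rhoA alpha (fun i => b i + u i) y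
    <= \sum_i g i * (p i - u i).
  rewrite /rhoA -sumrB; apply: ler_sum => i _.
  by rewrite (_ : p i - u i = b i + p i - (b i + u i)) ?rho_subgrad //; ring.
have obtuse := is_proj_cov_grad_le0 y alpha_mono proj_p.
have split_pu : \sum_i g i * (p i - u i) =
    \sum_i g i * (p i - z i) + \sum_i g i * (z i - u i).
  by rewrite -big_split; apply: eq_bigr => i _ /=; ring.
suff : \sum_i g i * (z i - u i) <=
    \sum_i (((z i - u i) ^+ 2 - (z' i - u i) ^+ 2) / (2 * eta) + eta / 2).
  rewrite big_split /= sumr_const card_ord -mulr_suml sumrB -mulr_natr.
  rewrite /sqdist (mulrAC eta); lra.
apply: ler_sum => i _; rewrite z'E; apply: gradient_step_le => //.
exact: sqr_cov_sub_le1.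
Qed.

Definition clamp (R : realType) (r x : R) : R :=
  if x < - r then - r else if r < x then r else x.

Lemma clampP (R : realType) (r x : R) :
  [\/ clamp r x = x /\ - r <= x <= r, clamp r x = r /\ r < x
     | clamp r x = - r /\ x < - r].
Proof.
rewrite /clamp; case: ltP => _; first by constructor 3.
by case: ltP => _; [constructor 2 | constructor 1].
Qed.

Lemma sqr_clamp_le (R : realType) (r x : R) : 0 <= r -> clamp r x ^+ 2 <= r ^+ 2.
Proof. by move=> r_ge0; case: (clampP r x) => [[-> ?]|[-> _]|[-> _]]; nra. Qed.

(* the loss is nonincreasing left of [y - c] and nondecreasing right of it *)
Lemma rho_clamp (R : realType) (a c x y r : R) : 0 <= a <= 1 ->
  `|y - c| <= r -> rho a (c + clamp r x) y <= rho a (c + x) y.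
Proof.
move=> /andP[a0 a1]; rewrite ler_norml => /andP[yc_ge yc_le].
have normE (d : R) : `|d| = if 0 <= d then d else - d.
  by case: leP => [/ger0_norm | /ltr0_norm].
rewrite /rho !normE.
case: (leP 0 (y - (c + clamp r x))) => h1; case: (leP 0 (y - (c + x))) => h2;
  case: (clampP r x) => [[E /andP[h3 h4]]|[E h3]|[E h3]]; rewrite E in h1 *; nra.
Qed.

Lemma sum_telescope_le (R : realType) (f D : nat -> R) (k c : R) (T : nat) :
  (forall t, (1 <= t)%N -> f t <= (D t - D t.+1) * k + c) ->
  \sum_(1 <= t < T.+1) f t <= (D 1%N - D T.+1) * k + T%:R * c.
Proof.
move=> f_le; apply: le_trans (ler_sum_nat (fun t tT => f_le t (proj1 (andP tT)))) _.
rewrite big_split /= -mulr_suml sumr_const_nat subSS subn0 mulr_natl.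
suff -> : \sum_(1 <= t < T.+1) (D t - D t.+1) = D 1%N - D T.+1 by [].
by rewrite -opprB -telescope_sumr // -sumrN; apply: eq_bigr => t _; rewrite opprB.
Qed.

Lemma multiqt_regret (R : realType) m (alpha : 'I_m -> R) (b : nat -> 'I_m -> R)
    (y : nat -> R) (r eta : R) (T : nat) (theta thetatilde : nat -> 'I_m -> R)
    (u : 'I_m -> R) :
  (forall i j : 'I_m, (i <= j)%N -> alpha i <= alpha j) ->
  (forall i, 0 <= alpha i <= 1) -> 0 < eta ->
  thetatilde 1%N = (fun _ => 0) ->
  MultiQT_run alpha eta b y theta thetatilde ->
  (forall i, u i ^+ 2 <= r ^+ 2) ->
  \sum_(1 <= t < T.+1) rhoA alpha (fun i => b t i + theta t i) (y t)
  - \sum_(1 <= t < T.+1) rhoA alpha (fun i => b t i + u i) (y t)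
  <= m%:R * r ^+ 2 / (2 * eta) + T%:R * (eta * m%:R / 2).
Proof.
move=> alpha_mono alpha01 eta_gt0 tt1 run u_le.
pose D t := sqdist (thetatilde t) u.
have D1_le : D 1%N <= m%:R * r ^+ 2.
  rewrite mulr_natl -[X in _ *+ X]card_ord -sumr_const /D tt1.
  by apply: ler_sum => i _; rewrite sub0r sqrrN.
have DT_ge0 : 0 <= D T.+1 by apply: sumr_ge0 => i _; exact: sqr_ge0.
have D_gap : (D 1%N - D T.+1) / (2 * eta) <= m%:R * r ^+ 2 / (2 * eta).
  by rewrite ler_pM2r ?invr_gt0 ?mulr_gt0 //; lra.
rewrite -sumrB.
apply: le_trans (_ : _ <= (D 1%N - D T.+1) / (2 * eta) + T%:R * (eta * m%:R / 2)) _.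
  apply: sum_telescope_le => t t_ge1.
  have [proj_t tt_next] := run t t_ge1; exact: multiqt_step.
by rewrite lerD2r.
Qed.

Theorem proposition8 (R : realType) (m : nat) (alpha : 'I_m -> R)
  (b : nat -> 'I_m -> R) (y : nat -> R) (Rb eta : R) (T : nat)
  (theta thetatilde : nat -> 'I_m -> R) :
  (forall i j : 'I_m, (i < j)%N -> alpha i < alpha j) ->
  (forall i : 'I_m, 0 < alpha i < 1) ->
  (forall t : nat, (1 <= t)%N -> inK (b t)) ->
  (forall t : nat, (1 <= t)%N -> forall i : 'I_m, `|y t - b t i| <= Rb) ->
  0 < eta ->
  (0 < T)%N ->
  thetatilde 1%N = (fun _ => 0) ->
  MultiQT_run alpha eta b y theta thetatilde ->
  forall th : 'I_m -> R,
    (forall t : nat, (1 <= t <= T.+1)%N -> inK_minus (b t) th) ->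
    T%:R^-1 * (\sum_(1 <= t < T.+1) rhoA alpha (fun i => b t i + theta t i) (y t))
    - T%:R^-1 * (\sum_(1 <= t < T.+1) rhoA alpha (fun i => b t i + th i) (y t))
    <= Rb ^+ 2 * m%:R / (2 * eta * T%:R) + 2 * eta * m%:R.
Proof.
move=> alpha_lt alpha_01 _ y_near eta_gt0 T_gt0 tt1 run th _.
have alpha_mono (i j : 'I_m) : (i <= j)%N -> alpha i <= alpha j.
  by rewrite leq_eqVlt => /orP[/eqP/val_inj -> // | /alpha_lt/ltW].
have alpha_le (i : 'I_m) : 0 <= alpha i <= 1.
  by have /andP[? ?] := alpha_01 i; rewrite !ltW.
pose u i := clamp Rb (th i).
have regret_u := multiqt_regret T (u := u) alpha_mono alpha_le eta_gt0 tt1 run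
  (fun i => sqr_clamp_le (th i) (le_trans (normr_ge0 _) (y_near 1%N isT i))).
have clamp_le : \sum_(1 <= t < T.+1) rhoA alpha (fun i => b t i + u i) (y t)
    <= \sum_(1 <= t < T.+1) rhoA alpha (fun i => b t i + th i) (y t).
  apply: ler_sum_nat => t /andP[t_ge1 _]; apply: ler_sum => i _.
  exact: rho_clamp (alpha_le i) (y_near t t_ge1 i).
have Tr_gt0 : 0 < T%:R :> R by rewrite ltr0n.
have drift_le : T%:R * (eta * m%:R / 2) <= T%:R * (2 * eta * m%:R).
  by rewrite ler_pM2l //; have := ler0n R m; nra.
rewrite -mulrBr mulrC ler_pdivrMr // mulrDl.
rewrite (_ : _ / (2 * eta * T%:R) * T%:R = m%:R * Rb ^+ 2 / (2 * eta)); last first.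
  by field; rewrite pnatr_eq0 -lt0n T_gt0 andbT; lra.
lra.
Qed.
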